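(* Let $H$ be a finite simple graph with $n=|V(H)|\ge1$ vertices, chromatic number $\chi=\chi(H)$, and $m'(H)$ non-edges. Then $$\left\lceil \frac{n}{\chi} \right\rceil \left( n - \frac{\chi}{2}\left\lceil\frac{n}{\chi}-1\right\rceil\right) = n+m'(H)$$ holds if and only if $H$ is a Turán graph.
   Context: All graphs are finite and simple. A non-edge of $H$ is an unordered pair of distinct non-adjacent vertices. The Turán graph $T(n,r)$ is the complete $r$-partite graph on $n$ vertices whose $r$ classes have sizes as equal as possible (any two class sizes differ by at most one); a Turán graph is a graph isomorphic to some $T(n,r)$. *)

From mathcomp Require Import all_boot all_order all_algebra.
Set Implicit Arguments. Unset Strict Implicit. Unset Printing Implicit Defensive.
Import Order.TTheory GRing.Theory Num.Theory.

Definition simple_graph (T : finType) (e : rel T) : Prop :=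
  symmetric e /\ irreflexive e.

Definition colorable (T : finType) (e : rel T) (k : nat) : bool :=
  [exists f : {ffun T -> 'I_k}, [forall x, forall y, e x y ==> (f x != f y)]].

(* chromatic number: least k <= #|T| admitting a proper k-colouring
   (for a loopless graph, k = #|T| always works, so this is the true minimum) *)
Definition chromatic_number (T : finType) (e : rel T) : nat :=
  \big[minn/#|T|]_(k < #|T|.+1 | colorable e k) k.

Definition num_nonedges (T : finType) (e : rel T) : nat :=
  #|[set A : {set T} | [exists x, exists y,
        [&& x != y, A == [set x; y] & ~~ e x y]]]|.

(* H is isomorphic to the Turán graph T(n, r) for some r: there is a partition
   of the vertices into r classes (class map f) such that two vertices are
   adjacent iff they lie in different classes, and any two class sizes differ
   by at most one. *)
Definition is_turan (T : finType) (e : rel T) : Prop :=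
  exists (r : nat) (f : T -> 'I_r),
    (forall x y, e x y = (f x != f y)) /\
    (forall i j : 'I_r, #|[set x | f x == i]| <= #|[set x | f x == j]|.+1)%N.

From mathcomp Require Import all_boot all_order all_algebra.
From mathcomp Require Import ring lra zify.
Import Order.TTheory GRing.Theory Num.Theory.
Set Implicit Arguments. Unset Strict Implicit. Unset Printing Implicit Defensive.

(* Let g be a proper colouring of H with chi colours and class sizes c_i. Every pair
   inside a class is a non-edge, so m'(H) >= sum_i C(c_i, 2). With q = n %/ chi,
   convexity in the form q c <= C(c, 2) + C(q + 1, 2), with equality iff c is q or
   q + 1, shows that this sum is at least the number t(n, chi) of non-edges of
   T(n, chi), with equality iff the classes are balanced. The left-hand side of the
   identity is n + t(n, chi), so it holds iff g is balanced and every non-edge lies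
   inside a class, i.e. H is the Turan graph with classes given by g. Conversely a
   Turan graph with r classes has exactly t(n, r) non-edges, and chi <= r together
   with the monotonicity of t(n, .) squeezes t(n, chi) between t(n, r) and m'(H). *)

(* T(n, k) has n %% k classes of size n %/ k + 1 and the others of size n %/ k;
   recall C(q + 1, 2) = C(q, 2) + q. *)
Definition turan_nonedges (n k : nat) : nat := k * 'C(n %/ k, 2) + n %/ k * (n %% k).

Lemma bin2_double c : 'C(c, 2) * 2 + c = c * c.
Proof. by rewrite mulnC -mul_bin_diag bin1; case: c => //= c; rewrite -mulnSr. Qed.

Lemma leqif_bin2 q c : q * c <= 'C(c, 2) + 'C(q.+1, 2) ?= iff (q <= c <= q.+1).
Proof.
have := bin2_double c; have := bin2_double q.+1 => bin2_q bin2_c.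
split; first by case: (leqP c q) => ?; nia.
apply/eqP/idP => [E | /andP[lo hi]].
  by apply/andP; split; rewrite leqNgt; apply/negP => lt; nia.
have [|] : c = q \/ c = q.+1 by lia.
all: by move=> ?; subst c; nia.
Qed.

Lemma mul_div_turan_nonedges n k :
  n %/ k * n = turan_nonedges n k + k * 'C((n %/ k).+1, 2).
Proof.
rewrite /turan_nonedges binS bin1; have := bin2_double (n %/ k).
have := divn_eq n k; set q := n %/ k; set s := n %% k; nia.
Qed.

Lemma sum_bin2_leqif k n (c : 'I_k -> nat) : \sum_i c i = n ->
  turan_nonedges n k <= \sum_i 'C(c i, 2) ?= iff [forall i, n %/ k <= c i <= (n %/ k).+1].
Proof.
move=> sum_c; rewrite -(mono_leqif (leq_add2r (k * 'C((n %/ k).+1, 2)))).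
rewrite -mul_div_turan_nonedges -{2}sum_c big_distrr.
rewrite -[k in k * _]card_ord -sum_nat_const -big_split.
exact: leqif_sum (fun i _ => leqif_bin2 _ (c i)).
Qed.

Lemma ltn_sum (I : finType) (E1 E2 : I -> nat) j :
  (forall i, E1 i <= E2 i) -> E1 j < E2 j -> \sum_i E1 i < \sum_i E2 i.
Proof.
move=> le12 lt12; have /ltn_leqif-> := leqif_sum (fun i (_ : true) => leqif_eq (le12 i)).
by apply/forallPn; exists j; rewrite /= neq_ltn lt12.
Qed.

Lemma near_meanP k n (c : 'I_k -> nat) : \sum_i c i = n ->
  reflect (forall i j, c i <= (c j).+1) [forall i, n %/ k <= c i <= (n %/ k).+1].
Proof.
move=> sum_c; apply: (iffP forallP) => [near i j | bal i].
  by have := near i; have := near j; lia.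
have k_gt0 : 0 < k by apply: leq_ltn_trans (ltn_ord i).
apply/andP; split.
  rewrite -ltnS ltn_divLR // -sum_c -[k in _ * k]card_ord mulnC -sum_nat_const.
  exact: ltn_sum (fun j => bal j i) (ltnSn (c i)).
case c_i: (c i) (bal i) => [|m] bal_m //; rewrite ltnS leq_divRL // -sum_c.
rewrite -[k in _ * k]card_ord mulnC -sum_nat_const ltnW //.
by apply: (ltn_sum (j := i)) => [j|]; rewrite ?c_i // -ltnS.
Qed.

Lemma sum_ord_widen k k' (F : nat -> nat) : k <= k' ->
  \sum_(i < k') (if i < k then F i else 0) = \sum_(i < k) F i.
Proof. by move=> le_kk'; rewrite -big_mkcond -big_ord_widen. Qed.

Lemma leq_turan_nonedges n k k' : 0 < k -> k <= k' ->
  turan_nonedges n k' <= turan_nonedges n k.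
Proof.
(* A balanced k-partition, padded with k' - k empty classes, is a k'-partition. *)
move=> k_gt0 le_kk'; pose bal i := n %/ k + (i < n %% k).
have sum_bal : \sum_(i < k) bal i = n.
  rewrite big_split sum_nat_const card_ord /= (sum_ord_widen (fun _ => 1)).
    by rewrite sum_nat_const card_ord muln1 mulnC -divn_eq.
  by rewrite ltnW // ltn_mod.
have bal_turan : turan_nonedges n k = \sum_(i < k) 'C(bal i, 2).
  apply: eqTleqif (sum_bin2_leqif sum_bal) _.
  by apply/forallP => i; rewrite /bal leq_addr -[(n %/ k).+1]addn1 leq_add2l leq_b1.
have sum_pad : \sum_(i < k') (if i < k then bal i else 0) = n.
  by rewrite sum_ord_widen.
rewrite bal_turan -(sum_ord_widen (fun i => 'C(bal i, 2)) le_kk').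
have /leq_of_leqif := sum_bin2_leqif sum_pad.
by congr (_ <= _); apply: eq_bigr => i _; case: ifP.
Qed.

Lemma card_bigcup_disjoint (I T : finType) (D : I -> {set T}) :
    (forall i j, i != j -> [disjoint D i & D j]) ->
  #|\bigcup_i D i| = \sum_i #|D i|.
Proof.
have cardE (A : {set T}) : #|A| = \sum_x (x \in A : nat).
  by rewrite -sum1_card big_mkcond.
move=> disjD; rewrite cardE (eq_bigr _ (fun i _ => cardE (D i))) exchange_big.
apply: eq_bigr => x _; case: (boolP (x \in \bigcup_i D i)) => [|notin_D].
  case/bigcupP=> i _ Di_x; rewrite (bigD1 i) //= Di_x big1 // => j ji.
  by rewrite (disjointFr (disjD i j _) Di_x) // eq_sym.
rewrite big1 // => i _; apply/eqP; rewrite eqb0.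
by apply: contra notin_D => ?; apply/bigcupP; exists i.
Qed.

Section Colourings.
Variables (T : finType) (e : rel T).

Lemma colorableP k :
  reflect (exists g : T -> 'I_k, forall x y, e x y -> g x != g y) (colorable e k).
Proof.
apply: (iffP existsP) => [[f /forallP proper_f] | [g proper_g]].
  by exists f => x y; move: (proper_f x) => /forallP/(_ y)/implyP.
exists [ffun x => g x]; apply/forallP => x; apply/forallP => y; apply/implyP => exy.
by rewrite !ffunE proper_g.
Qed.

Lemma chromatic_number_colorable : irreflexive e -> colorable e (chromatic_number e).
Proof.
move=> irr; apply: (big_ind (colorable e)) => // [|a b col_a col_b].
  apply/colorableP; exists enum_rank => x y; apply: contraTneq => /enum_rank_inj->.
  by rewrite irr.
by rewrite /minn; case: ltnP.
Qed.

Lemma chromatic_number_min k : colorable e k -> chromatic_number e <= k.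
Proof.
move=> col_k; have [le_kT | lt_Tk] := leqP k #|T|.
  exact: (@bigmin_le_cond _ nat _ #|T| (Ordinal (le_kT : k < #|T|.+1))).
exact: leq_trans (@bigmin_le_id _ nat _ _ _ _ _) (ltnW lt_Tk).
Qed.

Lemma colorable_gt0 k : 0 < #|T| -> colorable e k -> 0 < k.
Proof. by case/card_gt0P=> x _ /colorableP[g _]; case: (g x) => i; apply: leq_ltn_trans. Qed.

Definition nonedges : {set {set T}} := [set A : {set T} | [exists x, exists y,
  [&& x != y, A == [set x; y] & ~~ e x y]]].

Lemma pair_nonedge x y : x != y -> ~~ e x y -> [set x; y] \in nonedges.
Proof.
by move=> xy nexy; rewrite inE; apply/existsP; exists x; apply/existsP; exists y; rewrite xy eqxx.
Qed.

Lemma card_nonedges : #|nonedges| = num_nonedges e. Proof. by []. Qed.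

Variables (k : nat) (g : T -> 'I_k).

Definition colour_class (i : 'I_k) : {set T} := [set x | g x == i].

Definition pairs_within (B : {set T}) : {set {set T}} :=
  [set A : {set T} | A \subset B & #|A| == 2].

Definition same_colour_pairs : {set {set T}} := \bigcup_i pairs_within (colour_class i).

Lemma sum_card_colour_class : \sum_i #|colour_class i| = #|T|.
Proof.
rewrite -sum1_card (partition_big g predT) //=; apply: eq_bigr => i _.
by rewrite -sum1_card; apply: eq_bigl => x; rewrite inE.
Qed.

Lemma card_same_colour_pairs :
  #|same_colour_pairs| = \sum_i 'C(#|colour_class i|, 2).
Proof.
rewrite card_bigcup_disjoint => [|i j ij]; first by apply: eq_bigr => i _; apply: cards_draws.
apply/pred0P => A /=; apply/negP => /andP[/setIdP[sub_i /eqP card_A] /setIdP[sub_j _]].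
have /card_gt0P[x A_x] : 0 < #|A| by rewrite card_A.
move: (subsetP sub_i x A_x) (subsetP sub_j x A_x); rewrite !inE => /eqP gx_i /eqP gx_j.
by rewrite -gx_i -gx_j eqxx in ij.
Qed.

Lemma pair_same_colour x y : x != y ->
  ([set x; y] \in same_colour_pairs) = (g x == g y).
Proof.
move=> xy; apply/bigcupP/eqP => [[i _]|gxy].
  by rewrite inE subUset !sub1set !inE => /andP[/andP[/eqP-> /eqP->] _].
by exists (g x) => //; rewrite inE cards2 xy subUset !sub1set !inE gxy eqxx.
Qed.

Lemma same_colour_sub_nonedges : (forall x y, e x y -> g x != g y) ->
  same_colour_pairs \subset nonedges.
Proof.
move=> proper; apply/subsetP => A same_A.
have /bigcupP[i _ /setIdP[_ /cards2P[x [y [xy def_A]]]]] := same_A.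
move: same_A; rewrite def_A pair_same_colour // => /eqP gxy.
by apply: pair_nonedge => //; apply/negP => /proper; rewrite gxy eqxx.
Qed.

Lemma nonedges_subP :
  reflect (forall x y, ~~ e x y -> g x = g y) (nonedges \subset same_colour_pairs).
Proof.
apply: (iffP subsetP) => [sub x y nexy | within A].
  have [-> // | xy] := eqVneq x y.
  by apply/eqP; rewrite -pair_same_colour // sub // pair_nonedge.
rewrite inE => /existsP[x /existsP[y /and3P[xy /eqP-> nexy]]].
by rewrite pair_same_colour // (within x y nexy).
Qed.

Lemma turan_nonedges_leqif : (forall x y, e x y -> g x != g y) ->
  turan_nonedges #|T| k <= num_nonedges e
    ?= iff [forall i, #|T| %/ k <= #|colour_class i| <= (#|T| %/ k).+1]
           && (nonedges \subset same_colour_pairs).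
Proof.
move=> proper; have t_le_same := sum_bin2_leqif sum_card_colour_class.
rewrite -card_same_colour_pairs in t_le_same; rewrite -card_nonedges.
exact: leqif_trans t_le_same (subset_leqif_card (same_colour_sub_nonedges proper)).
Qed.

End Colourings.

Local Open Scope ring_scope.

Section Ceil.
Variable R : archiRealFieldType.

Lemma intr_nat (m : nat) : m%:~R = m%:R :> R. Proof. by []. Qed.

Lemma ceil_divn n k : (0 < k)%N ->
  Num.ceil (n%:R / k%:R : R) = (n %/ k + (0 < n %% k))%N%:Z.
Proof.
move=> k_gt0; have k_neq0 : k%:R != 0 :> R by rewrite pnatr_eq0 -lt0n.
have -> : n%:R / k%:R = (n %/ k)%:R + (n %% k)%:R / k%:R :> R.
  by rewrite {1}(divn_eq n k) natrD natrM mulrDl mulfK.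
have rem_lt1 : (n %% k)%:R / k%:R < 1 :> R.
  by rewrite ltr_pdivrMr ?mul1r ?ltr_nat ?ltn_mod // ltr0n.
apply: ceil_def; rewrite intrB !intr_nat natrD; case: posnP => [->|s_gt0] /=.
  by rewrite mul0r !addr0 ltrBlDr ltrDl ltr01 lexx.
have : 0 < (n %% k)%:R / k%:R :> R by rewrite divr_gt0 ?ltr0n.
lra.
Qed.

Lemma ceilB1 (x : R) : Num.ceil (x - 1) = Num.ceil x - 1.
Proof. by rewrite ceilDrz ?rpredN1 // -(intrKceil (R := R) (-1)). Qed.

Lemma turan_nonedges_ceil n k : (0 < k)%N ->
  (Num.ceil (n%:R / k%:R : R))%:~R
    * (n%:R - k%:R / 2 * (Num.ceil (n%:R / k%:R - 1 : R))%:~R)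
  = (n + turan_nonedges n k)%:R :> R.
Proof.
move=> k_gt0; rewrite ceilB1 ceil_divn // intrB intr_nat /turan_nonedges.
have := congr1 (GRing.natmul (1 : R)) (bin2_double (n %/ k)%N).
have := divn_eq n k; set q := (n %/ k)%N; set s := (n %% k)%N.
move=> ->; rewrite !natrD !natrM => bin2q.
have -> : 'C(q, 2)%:R = (q%:R * q%:R - q%:R) / 2 :> R by rewrite -bin2q; field.
by case: posnP => [->|_]; rewrite ?addn0 ?addn1 ?natrD /=; field.
Qed.

End Ceil.

Theorem theorem1p2 (T : finType) (e : rel T) :
  simple_graph e -> (0 < #|T|)%N ->
  let n := #|T| in
  let chi := chromatic_number e in
  (((Num.ceil (n%:R / chi%:R : rat))%:~R : rat)
     * (n%:R - chi%:R / 2 * (Num.ceil (n%:R / chi%:R - 1 : rat))%:~R)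
   = (n + num_nonedges e)%:R)
  <-> is_turan e.
Proof.
move=> [_ irr] T_gt0 n chi.
have col_chi := chromatic_number_colorable irr.
have chi_gt0 : (0 < chi)%N := colorable_gt0 T_gt0 col_chi.
rewrite turan_nonedges_ceil // [_ = _](rwP eqP) eqr_nat eqn_add2l.
have /colorableP[g proper_g] := col_chi.
have t_le := turan_nonedges_leqif proper_g.
split => [| [r [f [e_f bal_f]]]].
  rewrite (eq_leqif t_le) => /andP[/(near_meanP (sum_card_colour_class g)) bal_g].
  move=> /nonedges_subP within_g; exists chi, g; split => // x y.
  by apply/idP/idP => [/proper_g // |]; apply: contraR => /within_g->.
have proper_f x y : e x y -> f x != f y by rewrite e_f.
have t_eq_f : turan_nonedges n r = num_nonedges e.
  apply/eqP; rewrite (eq_leqif (turan_nonedges_leqif proper_f)).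
  rewrite (introT (near_meanP (sum_card_colour_class f))) //=.
  by apply/nonedges_subP => x y; rewrite e_f negbK => /eqP.
have chi_le_r : (chi <= r)%N by apply/chromatic_number_min/colorableP; exists f.
have := leq_turan_nonedges n chi_gt0 chi_le_r; rewrite t_eq_f => le_nonedges.
by rewrite eqn_leq le_nonedges t_le.
Qed.
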